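(* Let $W$ be an ordered vector space which is monotone complete and which carries a faithful normal positive linear functional. Then every vector subspace $V$ of $W$ which is monotone sequentially closed in $W$ is monotone closed in $W$.
   Context: An ordered vector space $W$ is called monotone complete if every non-empty upper bounded upward directed subset of $W$ has a supremum in $W$ (in particular every upper bounded increasing sequence in $W$ has a supremum in $W$). For a vector subspace $V$ of such $W$: $V$ is monotone closed in $W$ if $V$ contains the supremum in $W$ of every non-empty upward directed subset of $V$ that is upper bounded in $W$; $V$ is monotone sequentially closed in $W$ if $V$ contains the supremum in $W$ of every increasing sequence in $V$ that is upper bounded in $W$. A positive linear functional $\psi$ on $W$ is faithful if $\psi(a)>0$ for every positive $a\neq 0$ in $W$, and normal if $\psi(\sup J)=\sup_{j\in J}\psi(j)$ for every non-empty upper bounded upward directed subset $J$ of $W$. *)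

From HB Require Import structures.
From mathcomp Require Import all_boot all_order all_algebra.
From mathcomp Require Import reals.
Set Implicit Arguments. Unset Strict Implicit. Unset Printing Implicit Defensive.
Import Order.TTheory GRing.Theory Num.Theory.
Local Open Scope ring_scope.

Definition ordered_vector_space (R : realType) (W : lmodType R) (le : W -> W -> Prop) : Prop :=
  [/\ (forall x, le x x),
      (forall x y, le x y -> le y x -> x = y),
      (forall x y z, le x y -> le y z -> le x z),
      (forall x y z, le x y -> le (x + z) (y + z)) &
      (forall (t : R) x y, 0 <= t -> le x y -> le (t *: x) (t *: y))].

Definition upper_bound (T : Type) (le : T -> T -> Prop) (A : T -> Prop) (b : T) : Prop :=
  forall a, A a -> le a b.
Definition upper_bounded (T : Type) (le : T -> T -> Prop) (A : T -> Prop) : Prop :=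
  exists b, upper_bound le A b.
Definition is_supremum (T : Type) (le : T -> T -> Prop) (A : T -> Prop) (s : T) : Prop :=
  upper_bound le A s /\ (forall b, upper_bound le A b -> le s b).
Definition upward_directed (T : Type) (le : T -> T -> Prop) (A : T -> Prop) : Prop :=
  forall x y, A x -> A y -> exists2 z, A z & le x z /\ le y z.
Definition nonempty (T : Type) (A : T -> Prop) : Prop := exists x, A x.
Definition increasing_seq (T : Type) (le : T -> T -> Prop) (u : nat -> T) : Prop :=
  forall n, le (u n) (u n.+1).

Definition monotone_complete (T : Type) (le : T -> T -> Prop) : Prop :=
  forall J : T -> Prop, nonempty J -> upward_directed le J -> upper_bounded le J ->
    exists s, is_supremum le J s.

Definition subspace (R : realType) (W : lmodType R) (V : W -> Prop) : Prop :=
  V 0 /\ (forall (a : R) u v, V u -> V v -> V (a *: u + v)).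

Definition monotone_closed (R : realType) (W : lmodType R) (le : W -> W -> Prop)
    (V : W -> Prop) : Prop :=
  forall J : W -> Prop, nonempty J -> (forall x, J x -> V x) -> upward_directed le J ->
    upper_bounded le J -> forall s, is_supremum le J s -> V s.

Definition monotone_seq_closed (R : realType) (W : lmodType R) (le : W -> W -> Prop)
    (V : W -> Prop) : Prop :=
  forall u : nat -> W, (forall n, V (u n)) -> increasing_seq le u ->
    upper_bounded le (fun x => exists n, x = u n) ->
    forall s, is_supremum le (fun x => exists n, x = u n) s -> V s.

Definition positive_linear_functional (R : realType) (W : lmodType R) (le : W -> W -> Prop)
    (psi : W -> R) : Prop :=
  (forall (a : R) x y, psi (a *: x + y) = a * psi x + psi y) /\
  (forall x, le 0 x -> 0 <= psi x).

Definition faithful (R : realType) (W : lmodType R) (le : W -> W -> Prop) (psi : W -> R) : Prop :=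
  forall a, le 0 a -> a != 0 -> 0 < psi a.

Definition normal (R : realType) (W : lmodType R) (le : W -> W -> Prop) (psi : W -> R) : Prop :=
  forall J : W -> Prop, nonempty J -> upward_directed le J -> upper_bounded le J ->
    forall s, is_supremum le J s ->
      is_supremum (fun a b : R => a <= b) (fun r => exists2 j, J j & r = psi j) (psi s).

From HB Require Import structures.
From mathcomp Require Import all_boot all_order all_algebra.
From mathcomp Require Import boolp reals.
Set Implicit Arguments. Unset Strict Implicit. Unset Printing Implicit Defensive.
Import Order.TTheory GRing.Theory Num.Theory.
Local Open Scope ring_scope.

(* Normality of psi lets us pick j_n in J with psi j_n > psi s - 1/(n+1);
   directedness turns (j_n) into an increasing sequence (u_n) in J dominating
   it. Its supremum t (which exists by monotone completeness) lies below s and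
   has psi t >= psi s, so faithfulness forces t = s. Hence the supremum of every
   bounded directed subset of V is the supremum of an increasing sequence in V. *)

Section DirectedSets.
Variables (T : Type) (le : T -> T -> Prop).

Lemma increasing_seq_directed (u : nat -> T) :
  (forall x, le x x) -> (forall x y z, le x y -> le y z -> le x z) ->
  increasing_seq le u -> upward_directed le (fun x => exists n, x = u n).
Proof.
move=> lerefl letrans uinc _ _ [n ->] [m ->].
have umon : {homo u : i j / (i <= j)%N >-> le i j}.
  by apply: homo_leq => // y x z; apply: letrans.
exists (u (maxn n m)); first by exists (maxn n m).
by split; apply: umon; rewrite ?leq_maxl ?leq_maxr.
Qed.

Lemma directed_dominating_seq (J : T -> Prop) (f : nat -> T) :
  upward_directed le J -> (forall n, J (f n)) ->
  exists u : nat -> T,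
    [/\ forall n, J (u n), increasing_seq le u & forall n, le (f n) (u n)].
Proof.
move=> Jdir Jf.
have join_ex (p : T * T) :
    exists z, J p.1 -> J p.2 -> [/\ J z, le p.1 z & le p.2 z].
  case: (pselect (J p.1 /\ J p.2)) => [[J1 J2]|notJ]; last first.
    by exists p.1 => J1 J2; case: notJ.
  by have [z Jz [le1 le2]] := Jdir _ _ J1 J2; exists z.
have [join joinP] := choice join_ex.
pose u := fix u n := if n is m.+1 then join (u m, f m.+1) else join (f 0, f 0).
have uP n : J (u n) /\ le (f n) (u n).
  elim: n => [|n [Jun _]] /=; first by have [] := joinP (f 0, f 0) (Jf 0) (Jf 0).
  by have [] := joinP (u n, f n.+1) Jun (Jf n.+1).
exists u; split=> [n|n|n]; [exact: (uP n).1 | | exact: (uP n).2].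
by have [] := joinP (u n, f n.+1) (uP n).1 (Jf n.+1).
Qed.

End DirectedSets.

Section RealSupremum.
Variable R : realType.

Lemma supremum_approx (S : R -> Prop) (x e : R) :
  is_supremum (fun a b : R => a <= b) S x -> 0 < e -> exists2 r, S r & x - e < r.
Proof.
move=> [_ xleast] e_gt0; apply: contrapT => noapprox.
suff : x <= x - e by rewrite lerBrDr gerDl leNgt e_gt0.
apply: xleast => r Sr; rewrite leNgt; apply/negP => ltr.
by apply: noapprox; exists r.
Qed.

Lemma le_of_subinv_lt (x y : R) : (forall n, x - n.+1%:R^-1 < y) -> x <= y.
Proof.
move=> xy; rewrite leNgt; apply/negP => /ltr_add_invr[n].
by rewrite -ltrBrDr => /lt_trans/(_ (xy n)); rewrite ltxx.
Qed.

End RealSupremum.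

Section PositiveFunctional.
Variables (R : realType) (W : lmodType R) (le : W -> W -> Prop) (psi : W -> R).
Hypothesis leD2r : forall x y z, le x y -> le (x + z) (y + z).
Hypothesis psi_plf : positive_linear_functional le psi.

Lemma plf_sub x y : psi (y - x) = psi y - psi x.
Proof.
have -> : y - x = (-1) *: x + y by rewrite scaleN1r addrC.
by rewrite psi_plf.1 mulN1r addrC.
Qed.

Lemma le_subr_ge0 x y : le x y -> le 0 (y - x).
Proof. by move=> lexy; have := leD2r (- x) lexy; rewrite subrr. Qed.

Lemma plf_monotone x y : le x y -> psi x <= psi y.
Proof. by move/le_subr_ge0/psi_plf.2; rewrite plf_sub subr_ge0. Qed.

Lemma faithful_plf_eq x y : faithful le psi -> le x y -> psi y <= psi x -> x = y.
Proof.
move=> psi_faithful lexy psiyx; apply/eqP; rewrite eq_sym -subr_eq0.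
apply: contraTT psiyx => /(psi_faithful _ (le_subr_ge0 lexy)).
by rewrite plf_sub subr_gt0 -ltNge.
Qed.

End PositiveFunctional.

Lemma directed_sup_is_seq_sup (R : realType) (W : lmodType R)
    (le : W -> W -> Prop) (psi : W -> R) (J : W -> Prop) (s : W) :
  ordered_vector_space le -> monotone_complete le ->
  positive_linear_functional le psi -> faithful le psi -> normal le psi ->
  nonempty J -> upward_directed le J -> is_supremum le J s ->
  exists u : nat -> W, [/\ forall n, J (u n), increasing_seq le u &
    is_supremum le (fun x => exists n, x = u n) s].
Proof.
move=> [lerefl _ letrans leD2r _] mc psi_plf psi_faithful psi_normal J0 Jdir [sJ sleast].
have Jub : upper_bounded le J by exists s.
have psi_s := psi_normal J J0 Jdir Jub s (conj sJ sleast).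
have approx n : exists j, J j /\ psi s - n.+1%:R^-1 < psi j.
  have inv_gt0 : 0 < n.+1%:R^-1 :> R by rewrite invr_gt0.
  by have [_ [j Jj ->] ?] := supremum_approx psi_s inv_gt0; exists j.
have [f fP] := choice approx.
have [u [Ju uinc fu]] := directed_dominating_seq Jdir (fun n => (fP n).1).
pose U x := exists n, x = u n.
have sU : upper_bound le U s by move=> _ [n ->]; apply: sJ.
have [t [tU tleast]] : exists t, is_supremum le U t.
  apply: mc; [by exists (u 0), 0%N | exact: increasing_seq_directed | by exists s].
suff <- : t = s by exists u.
apply: (faithful_plf_eq leD2r psi_plf psi_faithful (tleast s sU)).
apply: le_of_subinv_lt => n; apply: lt_le_trans (fP n).2 _.
apply: le_trans (plf_monotone leD2r psi_plf (fu n)) _.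
by apply: (plf_monotone leD2r psi_plf); apply: tU; exists n.
Qed.

Theorem corollary1 (R : realType) (W : lmodType R) (le : W -> W -> Prop)
  (psi : W -> R) :
  ordered_vector_space le ->
  monotone_complete le ->
  positive_linear_functional le psi -> faithful le psi -> normal le psi ->
  forall V : W -> Prop, subspace V -> monotone_seq_closed le V -> monotone_closed le V.
Proof.
move=> ovs mc psi_plf psi_faithful psi_normal V _ Vseq J J0 JV Jdir _ s Jsup.
have [u [Ju uinc usup]] :=
  directed_sup_is_seq_sup ovs mc psi_plf psi_faithful psi_normal J0 Jdir Jsup.
apply: (Vseq u _ uinc _ s usup); first by move=> n; apply/JV/Ju.
by exists s; apply: usup.1.
Qed.
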